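(* Let $K$ be a finite field of characteristic $p$ and let $d$ be an integer with $\gcd(d,|K|-1)=1$ that is nondegenerate over $K$. Then $|W_{K,d}(a)|<|K|$ for all $a\in K^\times$.
   Context: $\psi_K(x)=\exp(2\pi i\,\mathrm{Tr}_{K/\mathbb{F}_p}(x)/p)$ is the canonical additive character of $K$, and for $a\in K$ the Weil sum is $W_{K,d}(a)=\sum_{x\in K}\psi_K(x^d+ax)$ (a real algebraic integer). $d$ is degenerate over $K$ if $d\equiv p^j\pmod{|K|-1}$ for some integer $j$, and nondegenerate otherwise. *)

From HB Require Import structures.
From mathcomp Require Import all_boot all_order all_algebra all_field.
Set Implicit Arguments. Unset Strict Implicit. Unset Printing Implicit Defensive.
Import Order.TTheory GRing.Theory Num.Theory.
Local Open Scope ring_scope.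

(* The complex number exp(2 pi i / p), realised in algC:
   p.-root (-1) is the p-th root of -1 of minimal nonnegative argument,
   i.e. exp(i pi / p); its square is exp(2 i pi / p). *)
Definition zeta_p (p : nat) : algC := (p.-root (-1)) ^+ 2.

Definition absTrace (K : finFieldType) (p : nat) (x : K) : K :=
  \sum_(i < logn p #|K|) x ^+ (p ^ i).

Definition trace_nat (K : finFieldType) (p : nat) (x : K) : nat :=
  if [pick k : 'I_p | (k%:R : K) == absTrace p x] is Some k then val k else 0%N.

Definition psiK (K : finFieldType) (p : nat) (x : K) : algC :=
  zeta_p p ^+ trace_nat p x.

Definition weil_sum (K : finFieldType) (p d : nat) (a : K) : algC :=
  \sum_(x : K) psiK p (x ^+ d + a * x).

Definition degenerate (K : finFieldType) (p d : nat) : Prop :=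
  exists j : nat, d = p ^ j %[mod #|K|.-1].

From HB Require Import structures.
From mathcomp Require Import all_boot all_order all_algebra all_field.
From mathcomp Require Import cyclic zify.

Set Implicit Arguments.
Unset Strict Implicit.
Unset Printing Implicit Defensive.

Import Order.TTheory GRing.Theory Num.Theory.

(* Every term of W(a) is a p-th root of unity, so |W(a)| = |K| forces all
   terms to coincide, i.e. Tr(x^d) + Tr(a x) is constant on K.  Over a finite
   field, \sum_x x^k vanishes unless |K|-1 divides k > 0, in which case it is
   -1; so pairing with x^(|K|-2) kills the constant, kills Tr(x^d) (a surviving
   term would mean d p^i = 1 mod |K|-1, making d degenerate), and sends Tr(a x)
   to -a.  Hence a = 0. *)

Lemma dvdn_pred_add m k : (0 < m)%N -> (m %| m.-1 + k)%N = (k == 1 %[mod m])%N.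
Proof.
move=> m_gt0; rewrite /dvdn -(mod0n m) -(eqn_modDr 1) addnAC addn1 prednK //.
by rewrite mod0n modnDl.
Qed.

Lemma modn_expn_pinv m p n i d :
  p ^ n = 1 %[mod m] -> (i <= n)%N -> d * p ^ i = 1 %[mod m] -> d = p ^ (n - i) %[mod m].
Proof.
move=> pn_1 le_in dpi_1.
rewrite -[d]muln1 -modnMmr -pn_1 modnMmr -(subnKC le_in) expnD mulnA -modnMml dpi_1.
by rewrite modnMml mul1n addKn.
Qed.

Lemma expn_mod_predn_neq1 p n i :
  (1 < p)%N -> (0 < i < n)%N -> (p ^ i != 1 %[mod (p ^ n).-1])%N.
Proof.
move=> p_gt1 /andP[i_gt0 lt_in].
have pi_gt1 : (1 < p ^ i)%N by rewrite -(exp1n i) ltn_exp2r.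
have pi_lt : (p ^ i * p <= p ^ n)%N by rewrite -expnSr leq_exp2l.
by rewrite !modn_small; move: pi_gt1 pi_lt; move: (p ^ i) (p ^ n) => a b; nia.
Qed.

Local Open Scope ring_scope.

Lemma zeta_p_prim p : prime p -> p.-primitive_root (zeta_p p).
Proof.
move=> pr_p; have p_gt1 := prime_gt1 pr_p; have p_gt0 := ltnW p_gt1.
have yp : p.-root (-1) ^+ p = -1 :> algC by exact: rootCK.
have zp : zeta_p p ^+ p = 1 by rewrite /zeta_p exprAC yp sqrrN expr1n.
have z_neq1 : zeta_p p != 1.
  rewrite /zeta_p sqrf_eq1 negb_or; apply/andP; split.
    by apply/eqP => y_eq1; have := @ltrN10 algC; rewrite -yp y_eq1 expr1n ltr10.
  by apply/eqP => y_eqN1; have := rootC_lt0 (-1 : algC) p_gt1; rewrite y_eqN1 ltrN10.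
have [m prim_m m_dvd_p] := prim_order_exists p_gt0 zp.
have [m_eq1 | m_neq1] := eqVneq m 1%N.
  by have := prim_expr_order prim_m; rewrite m_eq1 expr1 => /eqP; rewrite (negPf z_neq1).
by move/(prime_nt_dvdP pr_p m_neq1): m_dvd_p => m_eq_p; rewrite m_eq_p in prim_m.
Qed.

Section FinFieldPowerSums.
Variable F : finFieldType.

Lemma natr_card_finField : #|F|%:R = 0 :> F.
Proof.
have [p pr_p pF] := finPcharP F; apply/eqP; rewrite -(dvdn_pcharf pF).
have := finNzRing_gt1 F; rewrite (card_pprimeChar pF).
by case: (logn p #|F|) => // n _; rewrite expnS dvdn_mulr.
Qed.

Lemma expf_card_pred (x : F) : x != 0 -> x ^+ #|F|.-1 = 1.
Proof.
move=> x_neq0; apply: (mulfI x_neq0).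
by rewrite mulr1 -exprS prednK ?expf_card // ltnW ?finNzRing_gt1.
Qed.

Lemma finField_prim_root : {w : F | (#|F|.-1).-primitive_root w}.
Proof.
have q1_gt0 : (0 < #|F|.-1)%N by rewrite ltn_predRL finNzRing_gt1.
have : has (#|F|.-1).-primitive_root (enum (predC1 (0 : F))).
  apply: has_prim_root => //; last by rewrite -cardE cardC1.
  - by apply/allP => x; rewrite mem_enum unity_rootE => /expf_card_pred ->.
  - exact: enum_uniq.
by case/hasP/sig2_eqW => w _ prim_w; exists w.
Qed.

Lemma sum_expr_eq0 k : ~~ (#|F|.-1 %| k)%N -> \sum_(x : F) x ^+ k = 0.
Proof.
move=> ndvd_k; have [w prim_w] := finField_prim_root.
have wk_neq1 : w ^+ k != 1 by rewrite -(prim_order_dvd prim_w).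
have w_neq0 : w != 0.
  apply/eqP => w0; have := prim_expr_order prim_w.
  by rewrite w0 expr0n gtn_eqF ?(prim_order_gt0 prim_w) // => /eqP; rewrite eq_sym oner_eq0.
have sum_mul : \sum_(x : F) x ^+ k = w ^+ k * \sum_(x : F) x ^+ k.
  rewrite mulr_sumr (reindex_inj (mulfI w_neq0)) /=.
  by apply: eq_bigr => x _; rewrite exprMn.
apply/eqP; move: sum_mul => /eqP; rewrite -subr_eq0 -{1}[\sum_x _]mul1r -mulrBl.
by rewrite mulf_eq0 subr_eq0 eq_sym (negPf wk_neq1).
Qed.

Lemma sum_expr_eqN1 k : (0 < k)%N -> (#|F|.-1 %| k)%N -> \sum_(x : F) x ^+ k = -1.
Proof.
move=> k_gt0 /dvdnP[j k_eq]; rewrite (bigD1 0) //= expr0n gtn_eqF // add0r.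
rewrite (eq_bigr (fun=> 1)) => [|x x_neq0]; last first.
  by rewrite k_eq mulnC exprM expf_card_pred ?expr1n.
rewrite sumr_const -[X in _ *+ X = _]/(#|predC1 (0 : F)|) cardC1.
apply/eqP; rewrite -addr_eq0 natr1 prednK ?natr_card_finField //.
exact: ltnW (finNzRing_gt1 F).
Qed.

End FinFieldPowerSums.

Lemma pFrobenius_fixed_natr (R : idomainType) p (y : R) :
  p \in [pchar R] -> y ^+ p = y -> exists k : 'I_p, y = k%:R.
Proof.
move=> pR yp_y; have pr_p := pcharf_prime pR.
suff /existsP[k /eqP y_eq] : [exists k : 'I_p, y == k%:R] by exists k.
apply: contraT => /existsPn y_notin_Fp.
pose P : {poly R} := 'X^p - 'X.
have size_P : size P = p.+1.
  by rewrite size_polyDl ?size_polyXn // size_polyN size_polyX ltnS prime_gt1.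
have Fp_inj : injective (fun k : 'I_p => k%:R : R).
  suff le_natr (i j : 'I_p) : i%:R = j%:R :> R -> (i <= j)%N.
    by move=> i j ij; apply/val_inj/anti_leq; rewrite (le_natr _ _ ij) (le_natr _ _ (esym ij)).
  move=> ij; rewrite leqNgt; apply/negP => lt_ji.
  have : (p %| i - j)%N.
    rewrite (dvdn_pcharf pR) natrB; last exact: ltnW.
    by rewrite ij subrr.
  by rewrite (gtnNdvd _ (leq_ltn_trans (leq_subr j i) (ltn_ord i))) ?subn_gt0.
have : (size (y :: [seq k%:R | k : 'I_p]) < size P)%N.
  apply: max_poly_roots; first by rewrite -size_poly_eq0 size_P.
    apply/allP => z; rewrite inE => /orP[/eqP -> | /mapP[k _ ->]].
      by rewrite /root !hornerE yp_y subrr.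
    by rewrite /root !hornerE -(pFrobenius_autE pR) pFrobenius_aut_nat subrr.
  rewrite /= map_inj_uniq ?enum_uniq // andbT.
  by apply/mapP => -[k _ y_eq]; have := y_notin_Fp k; rewrite y_eq eqxx.
by rewrite size_P /= size_map size_enum_ord ltnn.
Qed.

Section AbsoluteTrace.
Variables (K : finFieldType) (p : nat).
Hypothesis pK : p \in [pchar K].
Local Notation n := (logn p #|K|).
Let pr_p : prime p := pcharf_prime pK.
Let prim_zeta : p.-primitive_root (zeta_p p) := zeta_p_prim pr_p.

Lemma absTraceD (x y : K) : absTrace p (x + y) = absTrace p x + absTrace p y.
Proof.
rewrite /absTrace -big_split; apply: eq_bigr => i _.
by rewrite exprDn_pchar // pnatX (pnatE _ pr_p) pK.
Qed.

Lemma absTraceX_pchar (x : K) : absTrace p x ^+ p = absTrace p x.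
Proof.
rewrite /absTrace -(pFrobenius_autE pK) rmorph_sum /=.
under eq_bigr => i _ do rewrite pFrobenius_autE -exprM -expnSr.
apply: (addrI (x ^+ (p ^ 0))).
rewrite -(big_ord_recl n (fun i => x ^+ (p ^ i))) big_ord_recr /= addrC.
by rewrite expn0 expr1 -(card_pprimeChar pK) expf_card.
Qed.

Lemma trace_nat_lt (y : K) : (trace_nat p y < p)%N.
Proof.
by rewrite /trace_nat; case: pickP => [k _ | _] //=; exact: prime_gt0.
Qed.

Lemma trace_natE (y : K) : (trace_nat p y)%:R = absTrace p y.
Proof.
rewrite /trace_nat; case: pickP => [k /eqP -> // | not_Fp].
have [k Tr_y] := pFrobenius_fixed_natr pK (absTraceX_pchar y).
by have := not_Fp k; rewrite /= Tr_y eqxx.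
Qed.

Lemma norm_psiK (y : K) : `|psiK p y| = 1.
Proof.
have norm_zeta : `|zeta_p p| = 1.
  apply/eqP; rewrite -(pexpr_eq1 (prime_gt0 pr_p)) // -normrX.
  by rewrite (prim_expr_order prim_zeta) normr1.
by rewrite /psiK normrX norm_zeta expr1n.
Qed.

Lemma psiK_inj_absTrace (u v : K) : psiK p u = psiK p v -> absTrace p u = absTrace p v.
Proof.
move/eqP; rewrite (eq_prim_root_expr prim_zeta).
by rewrite !modn_small ?trace_nat_lt // -!trace_natE => /eqP ->.
Qed.

Lemma sum_expr_mul_absTrace (b : K) k e :
  \sum_(x : K) x ^+ e * absTrace p (b * x ^+ k) =
  \sum_(i < n) b ^+ (p ^ i) * \sum_(x : K) x ^+ (e + k * p ^ i).
Proof.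
under eq_bigr => x _ do rewrite /absTrace mulr_sumr.
rewrite exchange_big; apply: eq_bigr => i _; rewrite mulr_sumr.
by apply: eq_bigr => x _; rewrite exprMn -exprM exprD mulrCA.
Qed.

Let q_gt1 : (1 < #|K|)%N := finNzRing_gt1 K.
Let q1_gt0 : (0 < #|K|.-1)%N. Proof. by rewrite ltn_predRL. Qed.

Lemma sum_expr_pred2_absTrace_expr d :
  ~ degenerate K p d -> \sum_(x : K) x ^+ #|K|.-2 * absTrace p (x ^+ d) = 0.
Proof.
move=> ndeg; under eq_bigr => x _ do rewrite -[x ^+ d]mul1r.
rewrite sum_expr_mul_absTrace big1 // => i _.
rewrite sum_expr_eq0 ?mulr0 // dvdn_pred_add //; apply/negP => /eqP dpi_1.
apply: ndeg; exists (n - i)%N; apply: modn_expn_pinv dpi_1; last exact: ltnW.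
by rewrite -(card_pprimeChar pK) -{1}(prednK (ltnW q_gt1)) -addn1 modnDl.
Qed.

Lemma sum_expr_pred2_absTraceM (a : K) :
  \sum_(x : K) x ^+ #|K|.-2 * absTrace p (a * x) = - a.
Proof.
under eq_bigr => x _ do rewrite -[x in a * x]expr1.
have n_gt0 : (0 < n)%N.
  by rewrite lt0n; apply: contraTneq q_gt1 => n0; rewrite (card_pprimeChar pK) n0.
rewrite sum_expr_mul_absTrace -(prednK n_gt0) big_ord_recl [X in _ + X]big1 => [|i _].
  by rewrite addr0 expn0 expr1 sum_expr_eqN1 ?mulrN1 // mul1n addn1 prednK.
rewrite sum_expr_eq0 ?mulr0 // dvdn_pred_add // mul1n.
have := @expn_mod_predn_neq1 p n (lift ord0 i) (prime_gt1 pr_p).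
by rewrite -(card_pprimeChar pK) => -> //=; rewrite /bump add1n -ltn_predRL.
Qed.

End AbsoluteTrace.

Lemma absTrace_const_coef_eq0 (K : finFieldType) p d (a c : K) : p \in [pchar K] ->
  ~ degenerate K p d -> (forall x, absTrace p (x ^+ d) + absTrace p (a * x) = c) -> a = 0.
Proof.
move=> pK ndeg trace_const.
have q_gt2 : (2 < #|K|)%N.
  rewrite ltnNge; apply/negP => q_le2; apply: ndeg; exists 0%N.
  have -> : #|K|.-1 = 1%N by move: (finNzRing_gt1 K) q_le2; case: #|K| => [|[|[|]]].
  by rewrite !modn1.
have q2_ndvd : ~~ (#|K|.-1 %| #|K|.-2)%N.
  by rewrite -[#|K|.-2]addn0 dvdn_pred_add ?modn_small //; move: q_gt2; lia.
have : \sum_(x : K) x ^+ #|K|.-2 * (absTrace p (x ^+ d) + absTrace p (a * x)) = 0.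
  by under eq_bigr do rewrite trace_const; rewrite -mulr_suml sum_expr_eq0 ?mul0r.
rewrite (eq_bigr _ (fun x _ => mulrDr _ _ _)) big_split /=.
rewrite sum_expr_pred2_absTrace_expr // sum_expr_pred2_absTraceM //.
by rewrite add0r => /eqP; rewrite oppr_eq0 => /eqP.
Qed.

Theorem corollary2p2 (K : finFieldType) (p : nat) (d : nat) :
  p \in [pchar K] ->
  coprime d #|K|.-1 ->
  ~ degenerate K p d ->
  forall a : K, a != 0 -> `|weil_sum p d a| < (#|K|%:R : algC).
Proof.
move=> pK _ ndeg a a_neq0.
pose psi x := psiK p (x ^+ d + a * x).
have norm_psi x : `|psi x| = 1 by exact: norm_psiK.
have sum_norm : \sum_(x : K) `|psi x| = #|K|%:R.
  by rewrite (eq_bigr (fun=> 1)) // sumr_const cardT -cardE.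
have W_le : `|weil_sum p d a| <= #|K|%:R by rewrite -sum_norm ler_norm_sum.
rewrite lt_neqAle W_le andbT; apply: contra a_neq0 => /eqP W_eq.
have [t _ psi_const] := normC_sum_eq1 (etrans W_eq (esym sum_norm)) (fun x _ => norm_psi x).
apply/eqP/(absTrace_const_coef_eq0 pK ndeg (c := absTrace p (0 ^+ d + a * 0))) => x.
by rewrite -absTraceD //; apply: psiK_inj_absTrace; rewrite // !psi_const.
Qed.
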